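(* Let $p\in{\cal H}_R$ be a primitive element such that $\pi_c(p)=0$. Then $p=0$.
   Context: A rooted tree is a finite connected and simply connected graph with a distinguished vertex (the root), edges oriented away from the root. ${\cal H}_R$ is the commutative polynomial algebra over $\mathbb{Q}$ on isomorphism classes of rooted trees; its monomials (forests) form a basis, $1$ being the empty forest. An admissible cut $C$ of a tree $t$ is a nonempty set of edges such that every path from the root to a vertex contains at most one edge of $C$; removing them gives a forest in which $R^C(t)$ is the tree containing the root and $P^C(t)$ the product of the others. The coproduct is the algebra morphism $\Delta$ with $\Delta(t)=1\otimes t+t\otimes1+\sum_CP^C(t)\otimes R^C(t)$ on trees; $p$ is primitive iff $\Delta(p)=p\otimes1+1\otimes p$. $\pi_c$ is the linear projection of ${\cal H}_R$ onto the span of rooted trees which vanishes on every forest that is not a single tree (including the empty forest). *)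

From mathcomp Require Import all_boot all_order all_algebra.
Set Implicit Arguments. Unset Strict Implicit. Unset Printing Implicit Defensive.
Import GRing.Theory.
Local Open Scope ring_scope.

(* Planar representatives of rooted trees: a root with an ordered list of
   subtrees (edges go from the root to the roots of the subtrees). *)
Inductive tree := Node of seq tree.

(* A forest (monomial of H_R) is represented by a list of trees;
   the empty list is the empty forest 1. *)
Definition forest := seq tree.

Fixpoint lexle (s t : seq nat) : bool :=
  match s, t with
  | [::], _ => true
  | _ :: _, [::] => false
  | x :: s', y :: t' => (x < y)%N || ((x == y) && lexle s' t')
  end.

(* Canonical (AHU) code of a tree: two planar trees are isomorphic as
   rooted trees iff their codes coincide. *)
Fixpoint tcode (t : tree) : seq nat :=
  let: Node ts := t in 0%N :: flatten (sort lexle (map tcode ts)) ++ [:: 1%N].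

(* Canonical key of a forest: the multiset of isomorphism classes of its
   trees, i.e. the monomial it represents. *)
Definition fkey (f : forest) : seq (seq nat) := sort lexle (map tcode f).

(* Elements of H_R: finite formal Q-linear combinations of forests. *)
Definition H := seq (rat * forest).
Definition coeff (p : H) (f : forest) : rat :=
  \sum_(x <- p | fkey x.2 == fkey f) x.1.

(* Elements of H_R (x) H_R: combinations of pairs of forests (basis f (x) g). *)
Definition H2 := seq (rat * (forest * forest)).
Definition coeff2 (q : H2) (f g : forest) : rat :=
  \sum_(x <- q | (fkey x.2.1 == fkey f) && (fkey x.2.2 == fkey g)) x.1.

(* All admissible cuts of a tree, INCLUDING the empty cut, each given as
   (P^C(t) as a list of trees, R^C(t)).  For each child c of the root either
   the edge to c is cut (c goes to P), or one recursively takes a (possibly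
   empty) admissible cut of c. *)
Fixpoint allcuts (t : tree) : seq (forest * tree) :=
  let: Node ts := t in
  let fix go (l : seq tree) : seq (forest * forest) :=
    match l with
    | [::] => [:: ([::], [::])]
    | c :: l' =>
        [seq (a.1 ++ b.1, a.2 ++ b.2)
        | a <- ([:: ([:: c], [::])] ++ [seq (x.1, [:: x.2]) | x <- allcuts c]),
          b <- go l']
    end in
  [seq (x.1, Node x.2) | x <- go ts].

(* Nonempty admissible cuts: exactly those producing a nonempty P^C(t). *)
Definition cuts (t : tree) : seq (forest * tree) :=
  [seq x <- allcuts t | size x.1 != 0%N].

Definition Delta_tree (t : tree) : H2 :=
  [:: (1, ([::], [:: t])); (1, ([:: t], [::]))] ++
  [seq (1, (x.1, [:: x.2])) | x <- cuts t].

Definition mul2 (a b : H2) : H2 :=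
  [seq (x.1 * y.1, (x.2.1 ++ y.2.1, x.2.2 ++ y.2.2)) | x <- a, y <- b].

Definition Delta_forest (f : forest) : H2 :=
  foldr mul2 [:: (1, ([::], [::]))] (map Delta_tree f).

Definition Delta (p : H) : H2 :=
  flatten [seq [seq (x.1 * y.1, y.2) | y <- Delta_forest x.2] | x <- p].

Definition prim_rhs (p : H) : H2 :=
  [seq (x.1, (x.2, [::])) | x <- p] ++ [seq (x.1, ([::], x.2)) | x <- p].

Definition primitive (p : H) : Prop :=
  forall f g : forest, coeff2 (Delta p) f g = coeff2 (prim_rhs p) f g.

(* pi_c p = 0 : every single-tree coefficient vanishes *)
Definition pic_zero (p : H) : Prop := forall t : tree, coeff p [:: t] = 0.

Definition H_zero (p : H) : Prop := forall f : forest, coeff p f = 0.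

(* Suppose p <> 0.  Primitivity at 1 (x) 1 kills the coefficient of the empty forest and
   pi_c(p) = 0 kills the single trees, so, choosing a tree t of maximal size among all trees
   occurring in the support of p, some forest F0 = t A with A <> 1 has a nonzero
   coefficient.  By primitivity the coefficient of A (x) t in Delta(p) vanishes.  In
   Delta(g), for a forest g none of whose trees is larger than t, a term with a single tree
   of the size of t on the right can only come from the empty cut of one tree of g, all
   other trees of g being cut off entirely, since a nonempty cut strictly shrinks the
   root part.  Hence only the forests isomorphic to F0 contribute, with a positive
   integer multiplicity, which forces the coefficient of F0 to vanish.
   That Delta is well defined on isomorphism classes rests on the unique decomposition of
   a concatenation of tree codes, which are prime Dyck words, into those codes. *)

From HB Require Import structures.
From mathcomp Require Import all_boot all_order all_algebra.
Set Implicit Arguments. Unset Strict Implicit. Unset Printing Implicit Defensive.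
Import Order.TTheory GRing.Theory Num.Theory.

(** * Rooted trees and their codes *)

(* Membership in Prop, available before trees are given an eqType structure. *)
Fixpoint InT (c : tree) (l : seq tree) : Prop :=
  if l is c' :: l' then c' = c \/ InT c l' else False.

Definition tree_InT_ind (P : tree -> Prop)
    (IH : forall ts, (forall c, InT c ts -> P c) -> P (Node ts)) : forall t, P t :=
  fix F t := let: Node ts := t in IH ts
    ((fix G (l : seq tree) : forall c, InT c l -> P c :=
       if l is c' :: l' then fun c h =>
         match h with or_introl e => eq_ind c' P (F c') c e | or_intror h' => G l' c h' end
       else fun c h => match h with end) ts).

Fixpoint tree_enc (t : tree) : GenTree.tree nat :=
  let: Node ts := t in GenTree.Node 0 (map tree_enc ts).
Fixpoint tree_dec (t : GenTree.tree nat) : tree :=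
  if t is GenTree.Node _ l then Node (map tree_dec l) else Node [::].

Lemma tree_encK : cancel tree_enc tree_dec.
Proof.
elim/tree_InT_ind => ts IH /=; congr Node.
elim: ts IH => //= c l IHl IH; rewrite IH; last by left.
by rewrite IHl // => c' h; apply: IH; right.
Qed.

HB.instance Definition _ := Countable.copy tree (can_type tree_encK).

Lemma tree_ind (P : tree -> Prop) :
  (forall ts, (forall c, c \in ts -> P c) -> P (Node ts)) -> forall t, P t.
Proof.
move=> IH; elim/tree_InT_ind => ts IHts; apply: IH => c.
elim: ts IHts => //= c' l IHl IHts; rewrite inE => /predU1P[->|cl].
  by apply: IHts; left.
by apply: IHl => // c'' h; apply: IHts; right.
Qed.

Lemma lexleE : lexle =2 (<=%O : rel (seqlexi nat)).
Proof. by elim=> [|x s IH] [|y t] //=; rewrite lexi_cons -IH !leEnat; case: ltngtP. Qed.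

Lemma lexle_total : total lexle.
Proof. by move=> s t; rewrite !lexleE le_total. Qed.
Lemma lexle_trans : transitive lexle.
Proof. by move=> s t u; rewrite !lexleE; apply: le_trans. Qed.
Lemma lexle_anti : antisymmetric lexle.
Proof. by move=> s t; rewrite !lexleE; apply: le_anti. Qed.

Lemma fkeyP (u v : forest) :
  reflect (fkey u = fkey v) (perm_eq (map tcode u) (map tcode v)).
Proof. exact: (perm_sortP lexle_total lexle_trans lexle_anti). Qed.

Lemma perm_fkey (u : forest) : perm_eq (fkey u) (map tcode u).
Proof. by rewrite perm_sort. Qed.

Lemma fkey_cat (u v : forest) : fkey (u ++ v) = sort lexle (fkey u ++ fkey v).
Proof.
apply/(perm_sortP lexle_total lexle_trans lexle_anti).
by rewrite map_cat perm_sym perm_cat ?perm_fkey.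
Qed.

Lemma size_fkey (u : forest) : size (fkey u) = size u.
Proof. by rewrite size_sort size_map. Qed.

Lemma fkey_eq0 (u : forest) : (fkey u == [::]) = (u == [::]).
Proof. by rewrite -!size_eq0 size_fkey. Qed.

Lemma fkey1 (t : tree) : fkey [:: t] = [:: tcode t].
Proof. by []. Qed.

Lemma tcode_Node ts : tcode (Node ts) = 0 :: flatten (fkey ts) ++ [:: 1].
Proof. by []. Qed.

Definition opens (w : seq nat) := count (pred1 0) w.
Definition closes (w : seq nat) := count (predC1 0) w.

Lemma opens_cat u v : opens (u ++ v) = opens u + opens v.
Proof. exact: count_cat. Qed.

Lemma closes_cat u v : closes (u ++ v) = closes u + closes v.
Proof. exact: count_cat. Qed.

Definition balanced (w : seq nat) :=
  opens w = closes w /\ forall k, closes (take k w) <= opens (take k w).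

Definition prime_balanced (w : seq nat) := [/\ opens w = closes w, 0 < size w &
  forall k, 0 < k < size w -> closes (take k w) < opens (take k w)].

Lemma prime_balancedW w : prime_balanced w -> balanced w.
Proof.
case=> bal _ lt_pre; split=> // k; case: k => [|k]; first by rewrite take0.
have [/take_oversize->|lt_k] := leqP (size w) k.+1; first by rewrite bal.
exact/ltnW/lt_pre.
Qed.

Lemma balanced_cat u v : balanced u -> balanced v -> balanced (u ++ v).
Proof.
move=> [bal_u pre_u] [bal_v pre_v]; split; first by rewrite opens_cat closes_cat bal_u bal_v.
move=> k; rewrite take_cat; case: ifP => _ //.
by rewrite opens_cat closes_cat bal_u leq_add2l.
Qed.

Lemma balanced_flatten L : {in L, forall w, balanced w} -> balanced (flatten L).
Proof.
elim: L => [|w L IH] bal_L /=; first by split=> [|[]].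
apply: balanced_cat; first by apply: bal_L; rewrite mem_head.
by apply: IH => w' w'L; apply/bal_L/mem_behead.
Qed.

Lemma prime_balanced_wrap w : balanced w -> prime_balanced (0 :: w ++ [:: 1]).
Proof.
case=> bal_w pre_w; split=> //.
  by rewrite /= opens_cat closes_cat bal_w /= !addn0 add0n addnC.
case=> [|k] //=; rewrite size_cat addn1 ltnS => le_k_w.
by rewrite takel_cat // add0n add1n ltnS.
Qed.

Lemma prime_balanced_tcode t : prime_balanced (tcode t).
Proof.
elim/tree_ind: t => ts IH; rewrite tcode_Node; apply/prime_balanced_wrap/balanced_flatten => w.
by rewrite mem_sort => /mapP[c /IH/prime_balancedW bal_c ->].
Qed.

Lemma prime_balanced_cat_inj u v x y :
  prime_balanced u -> prime_balanced v -> u ++ x = v ++ y -> u = v.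
Proof.
wlog le_uv : u v x y / size u <= size v.
  move=> wlog pu pv e; have [le|/ltnW le] := leqP (size u) (size v).
    exact: wlog le pu pv e.
  by symmetry; apply: wlog le pv pu (esym e).
move=> [bal_u pos_u _] [_ _ pre_v] e.
have pre_u : take (size u) v = u.
  by have := congr1 (take (size u)) e; rewrite take_size_cat // takel_cat.
case: ltngtP le_uv => // [lt_uv|eq_uv] _; last by rewrite -pre_u eq_uv take_size.
by have := pre_v (size u); rewrite pos_u lt_uv pre_u bal_u ltnn => /(_ isT).
Qed.

Lemma flatten_prime_balanced_inj L L' :
    {in L, forall w, prime_balanced w} -> {in L', forall w, prime_balanced w} ->
  flatten L = flatten L' -> L = L'.
Proof.
have nonnil w L0 : prime_balanced w -> flatten (w :: L0) != [::].
  by case=> _ pos _; rewrite -size_eq0 size_cat -lt0n ltn_addr.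
elim: L L' => [|u L IH] [|v L'] //= pL pL'.
- by move/esym/eqP; rewrite (negbTE (nonnil _ _ (pL' v (mem_head _ _)))).
- by move/eqP; rewrite (negbTE (nonnil _ _ (pL u (mem_head _ _)))).
move=> e; have eq_uv := prime_balanced_cat_inj (pL u (mem_head _ _)) (pL' v (mem_head _ _)) e.
have {}e := congr1 (drop (size u)) e; rewrite !drop_size_cat ?eq_uv // in e.
rewrite eq_uv; congr cons; apply: IH e.
- by move=> w wL; apply/pL/mem_behead.
- by move=> w wL'; apply/pL'/mem_behead.
Qed.

Lemma tcode_Node_inj ts ts' : tcode (Node ts) = tcode (Node ts') -> fkey ts = fkey ts'.
Proof.
rewrite !tcode_Node => -[]; rewrite !cats1 => /rcons_inj[].
by apply: flatten_prime_balanced_inj => w; rewrite mem_sort => /mapP[c _ ->];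
  apply: prime_balanced_tcode.
Qed.

(** * Weighted lists up to keys *)

Local Open Scope ring_scope.

(* [a] and [b] put the same total weight on every key, i.e. they denote the same linear
   combination of key classes. *)
Definition wequiv (R : pzSemiRingType) (X K : Type) (w : X -> R) (k : X -> K) (a b : seq X) :=
  forall h : K -> R, \sum_(x <- a) w x * h (k x) = \sum_(x <- b) w x * h (k x).

Section WeightedEquivalence.
Variables (R : comPzSemiRingType) (X K : Type) (w : X -> R) (k : X -> K).
Local Notation equiv := (wequiv w k).

Lemma wequiv_refl a : equiv a a. Proof. by []. Qed.
Lemma wequiv_sym a b : equiv a b -> equiv b a. Proof. by move=> ab h; rewrite ab. Qed.
Lemma wequiv_trans a b c : equiv a b -> equiv b c -> equiv a c.
Proof. by move=> ab bc h; rewrite ab bc. Qed.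

Lemma wequiv_cons x y a b : w x = w y -> k x = k y -> equiv a b -> equiv (x :: a) (y :: b).
Proof. by move=> wxy kxy ab h; rewrite !big_cons ab wxy kxy. Qed.

Lemma wequiv_cat a b a' b' : equiv a a' -> equiv b b' -> equiv (a ++ b) (a' ++ b').
Proof. by move=> aa' bb' h; rewrite !big_cat aa' bb'. Qed.

Lemma wequiv_filter (P : pred X) (Q : pred K) a b :
  (forall x, P x = Q (k x)) -> equiv a b -> equiv (filter P a) (filter P b).
Proof.
move=> PQ ab h; have sum_mask c : \sum_(x <- c | P x) w x * h (k x) =
    \sum_(x <- c) w x * (if Q (k x) then h (k x) else 0).
  by rewrite big_mkcond; apply: eq_bigr => x _; rewrite PQ; case: (Q _); rewrite ?mulr0.
by rewrite !big_filter !sum_mask; apply: (ab (fun z => if Q z then h z else 0)).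
Qed.
End WeightedEquivalence.

Section WeightedMaps.
Variables (R : comPzSemiRingType) (X1 X2 Y K1 K2 L : Type).
Variables (w1 : X1 -> R) (k1 : X1 -> K1) (w2 : X2 -> R) (k2 : X2 -> K2).
Variables (w : Y -> R) (k : Y -> L).

Lemma wequiv_map (f : X1 -> Y) (psi : K1 -> L) a b :
    (forall x, w (f x) = w1 x) -> (forall x, k (f x) = psi (k1 x)) ->
  wequiv w1 k1 a b -> wequiv w k (map f a) (map f b).
Proof.
move=> w_f k_f ab h; rewrite !big_map.
under eq_bigr => x _ do rewrite w_f k_f.
under [RHS]eq_bigr => x _ do rewrite w_f k_f.
exact: (ab (h \o psi)).
Qed.

Lemma wequiv_allpairs (f : X1 -> X2 -> Y) (psi : K1 -> K2 -> L) a a' b b' :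
    (forall x y, w (f x y) = w1 x * w2 y) ->
    (forall x y, k (f x y) = psi (k1 x) (k2 y)) ->
    wequiv w1 k1 a a' -> wequiv w2 k2 b b' ->
  wequiv w k [seq f x y | x <- a, y <- b] [seq f x y | x <- a', y <- b'].
Proof.
move=> w_f k_f aa' bb' h; rewrite !big_allpairs_dep /=.
have inner a0 b0 : \sum_(x <- a0) \sum_(y <- b0) w (f x y) * h (k (f x y)) =
    \sum_(x <- a0) w1 x * \sum_(y <- b0) w2 y * h (psi (k1 x) (k2 y)).
  by apply: eq_bigr => x _; rewrite mulr_sumr; apply: eq_bigr => y _; rewrite w_f k_f mulrA.
rewrite !inner (aa' (fun z => \sum_(y <- b) w2 y * h (psi z (k2 y)))).
by apply: eq_bigr => x _; rewrite (bb' (h \o psi (k1 x))).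
Qed.

End WeightedMaps.

Section WeightedProducts.
Variables (R : comPzSemiRingType) (X K : Type) (w : X -> R) (k : X -> K).
Variables (mul : X -> X -> X) (kmul : K -> K -> K) (one : seq X).
Hypothesis w_mul : forall x y, w (mul x y) = w x * w y.
Hypothesis k_mul : forall x y, k (mul x y) = kmul (k x) (k y).
Hypothesis kmulCA : forall a b c, kmul a (kmul b c) = kmul b (kmul a c).
Local Notation equiv := (wequiv w k).

Definition wmul (a b : seq X) := [seq mul x y | x <- a, y <- b].

Definition wprod (T : Type) (F : T -> seq X) (l : seq T) := foldr (fun c => wmul (F c)) one l.

Lemma wequiv_wmul a a' b b' : equiv a a' -> equiv b b' -> equiv (wmul a b) (wmul a' b').
Proof. exact: wequiv_allpairs. Qed.

Lemma wequiv_wmulCA a b c : equiv (wmul a (wmul b c)) (wmul b (wmul a c)).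
Proof.
move=> h; have expand a0 b0 : \sum_(x <- wmul a0 (wmul b0 c)) w x * h (k x) =
    \sum_(x <- a0) \sum_(y <- b0) \sum_(z <- c) w x * w y * w z * h (kmul (k x) (kmul (k y) (k z))).
  rewrite big_allpairs_dep; apply: eq_bigr => x _; rewrite big_allpairs_dep.
  by apply: eq_bigr => y _; apply: eq_bigr => z _; rewrite !w_mul !k_mul !mulrA.
rewrite !expand exchange_big; apply: eq_bigr => y _; apply: eq_bigr => x _.
by apply: eq_bigr => z _; rewrite kmulCA [w x * _]mulrC.
Qed.

Section Products.
Variables (T : eqType) (KT : eqType) (kt : T -> KT) (F : T -> seq X).

Lemma wequiv_wprod_rot l1 c l2 :
  equiv (wprod F (l1 ++ c :: l2)) (wprod F (c :: l1 ++ l2)).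
Proof.
elim: l1 => [|d l1 IH] /=; first exact: wequiv_refl.
by move=> h; rewrite (wequiv_wmul (wequiv_refl _ _ (F d)) IH) wequiv_wmulCA.
Qed.

Lemma wequiv_wprod l l' :
    {in l, forall c c', kt c = kt c' -> equiv (F c) (F c')} ->
    perm_eq (map kt l) (map kt l') ->
  equiv (wprod F l) (wprod F l').
Proof.
elim: l l' => [|c l IH] l' F_kt; first by case: l' => // c' l' /perm_size.
move=> perm_l; have : kt c \in map kt l' by rewrite -(perm_mem perm_l) mem_head.
case/mapP => c' c'l' kt_c; case/splitPr: c'l' perm_l => l1 l2 perm_l.
apply: wequiv_trans (wequiv_sym (wequiv_wprod_rot l1 c' l2)).
apply: wequiv_wmul; first by apply: F_kt; rewrite ?mem_head.
apply: IH => [d dl|]; first by apply: F_kt; rewrite inE dl orbT.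
by rewrite -(perm_cons (kt c)) (perm_trans perm_l) // kt_c !map_cat /= -cat1s perm_catCA.
Qed.
End Products.
End WeightedProducts.

Lemma mem_wprod_additive (X : eqType) (mul : X -> X -> X) (one : seq X) (T : eqType)
    (F : T -> seq X) (phi : X -> nat) (psi : T -> nat) l x :
    {in one, forall y, phi y = 0%N} -> (forall y z, phi (mul y z) = (phi y + phi z)%N) ->
    {in l, forall c, {in F c, forall y, phi y = psi c}} ->
  x \in wprod mul one F l -> phi x = sumn (map psi l).
Proof.
move=> phi_one phi_mul; elim: l x => [|c l IH] x F_psi /=; first exact: phi_one.
case/allpairsP => -[y z] [/= yF zl ->]; rewrite phi_mul (IH z) ?(F_psi c) ?mem_head //.
by move=> d dl; apply/F_psi/mem_behead.
Qed.

(** * The coproduct is well defined on isomorphism classes *)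

Definition catp (x y : forest * forest) : forest * forest := (x.1 ++ y.1, x.2 ++ y.2).
Definition fkey2 (x : forest * forest) := (fkey x.1, fkey x.2).
Definition sort_cat2 (a b : seq (seq nat) * seq (seq nat)) :=
  (sort lexle (a.1 ++ b.1), sort lexle (a.2 ++ b.2)).
Definition cut_key (x : forest * tree) := (fkey x.1, tcode x.2).

Lemma fkey2_catp x y : fkey2 (catp x y) = sort_cat2 (fkey2 x) (fkey2 y).
Proof. by rewrite /fkey2 /= !fkey_cat. Qed.

Lemma sort_lexle_catCA (a b c : seq (seq nat)) :
  sort lexle (a ++ sort lexle (b ++ c)) = sort lexle (b ++ sort lexle (a ++ c)).
Proof.
have perm_sortl s : perm_eq (sort lexle s) s by rewrite perm_sort.
apply/(perm_sortP lexle_total lexle_trans lexle_anti).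
by rewrite (perm_catl a (perm_sortl _)) perm_sym (perm_catl b (perm_sortl _)) perm_catCA.
Qed.

Lemma sort_cat2CA a b c : sort_cat2 a (sort_cat2 b c) = sort_cat2 b (sort_cat2 a c).
Proof. by rewrite /sort_cat2 /= !(sort_lexle_catCA a.1) !(sort_lexle_catCA a.2). Qed.

Definition child_cuts (c : tree) : seq (forest * forest) :=
  [:: ([:: c], [::])] ++ [seq (x.1, [:: x.2]) | x <- allcuts c].

Lemma allcuts_Node ts :
  allcuts (Node ts) = [seq (x.1, Node x.2) | x <- wprod catp [:: ([::], [::])] child_cuts ts].
Proof. by congr map; elim: ts => //= c ts ->. Qed.

Local Notation cuts_equiv := (wequiv (fun=> 1 : rat) cut_key).
Local Notation pairs_equiv := (wequiv (fun=> 1 : rat) fkey2).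

Lemma child_cuts_wequiv c c' :
  tcode c = tcode c' -> cuts_equiv (allcuts c) (allcuts c') ->
  pairs_equiv (child_cuts c) (child_cuts c').
Proof.
move=> eq_c cuts_c; apply: wequiv_cat.
  by apply: wequiv_cons => //; rewrite /fkey2 /= !fkey1 eq_c.
by apply: (wequiv_map (psi := fun z => (z.1, [:: z.2]))) cuts_c.
Qed.

Lemma allcuts_wequiv s s' : tcode s = tcode s' -> cuts_equiv (allcuts s) (allcuts s').
Proof.
elim/tree_ind: s s' => ts IH [ts'] eq_s; rewrite !allcuts_Node.
apply: (wequiv_map (k1 := fkey2)
  (psi := fun z => (z.1, 0%N :: flatten z.2 ++ [:: 1%N]))) => //.
apply: (wequiv_wprod _ _ _ sort_cat2CA (kt := tcode)).
- by move=> x y; rewrite mulr1.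
- exact: fkey2_catp.
- by move=> c cts c' eq_c; apply: child_cuts_wequiv (IH c cts c' eq_c).
- exact/fkeyP/tcode_Node_inj.
Qed.

Definition mulH2 (x y : rat * (forest * forest)) := (x.1 * y.1, catp x.2 y.2).

Lemma Delta_forestE g : Delta_forest g = wprod mulH2 [:: (1, ([::], [::]))] Delta_tree g.
Proof. by rewrite /Delta_forest foldr_map. Qed.

Local Notation H2_equiv := (wequiv (fun x : rat * (forest * forest) => x.1) (fkey2 \o snd)).

Lemma Delta_tree_wequiv c c' : tcode c = tcode c' -> H2_equiv (Delta_tree c) (Delta_tree c').
Proof.
move=> eq_c; apply: wequiv_cat.
  have fkey_c : fkey [:: c] = fkey [:: c'] by rewrite !fkey1 eq_c.
  by apply: wequiv_cons; last apply: wequiv_cons; rewrite //= /fkey2 /= fkey_c.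
apply: (wequiv_map (k1 := cut_key) (psi := fun z => (z.1, [:: z.2]))) => //.
apply: (wequiv_filter (Q := fun z => size z.1 != 0%N)) => [x|]; first by rewrite size_fkey.
exact: allcuts_wequiv.
Qed.

Lemma Delta_forest_wequiv g g' : fkey g = fkey g' -> H2_equiv (Delta_forest g) (Delta_forest g').
Proof.
move/fkeyP => perm_g; rewrite !Delta_forestE.
apply: (wequiv_wprod _ _ _ sort_cat2CA (kt := tcode)) => // [x y|c _ c'].
- exact: fkey2_catp.
- exact: Delta_tree_wequiv.
Qed.

Lemma coeff2_wequiv q q' f g : H2_equiv q q' -> coeff2 q f g = coeff2 q' f g.
Proof.
have coeff2E r : coeff2 r f g =
    \sum_(x <- r) x.1 * (fun z => (z == (fkey f, fkey g))%:R) (fkey2 x.2).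
  rewrite /coeff2 big_mkcond; apply: eq_bigr => x _.
  by rewrite /= xpair_eqE; case: ifP; rewrite ?mulr1 ?mulr0.
by move=> qq'; rewrite !coeff2E (qq' (fun z => (z == (fkey f, fkey g))%:R)).
Qed.

(** * Sizes and the terms of the coproduct *)

(* The length of the code, i.e. twice the number of vertices: being read off the code, it
   is invariant under isomorphism. *)
Definition tree_size (t : tree) := size (tcode t).
Definition forest_size (f : forest) := sumn (map tree_size f).

Lemma tree_size_gt0 t : (0 < tree_size t)%N.
Proof. by case: (prime_balanced_tcode t). Qed.

Lemma forest_size_cat u v : forest_size (u ++ v) = (forest_size u + forest_size v)%N.
Proof. by rewrite /forest_size map_cat sumn_cat. Qed.

Lemma forest_size_gt0 f : f != [::] -> (0 < forest_size f)%N.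
Proof. by case: f => // c f _; rewrite ltn_addr ?tree_size_gt0. Qed.

Lemma tree_size_Node ts : tree_size (Node ts) = (forest_size ts).+2.
Proof.
rewrite /tree_size tcode_Node /= size_cat addn1 size_flatten /shape.
by rewrite (perm_sumn (perm_map size (perm_fkey ts))) -map_comp.
Qed.

Lemma allcuts_size t x : x \in allcuts t -> (forest_size x.1 + tree_size x.2)%N = tree_size t.
Proof.
elim/tree_ind: t x => ts IH x; rewrite allcuts_Node => /mapP[y y_ts ->] /=.
rewrite !tree_size_Node !addnS; congr _.+2.
pose phi (z : forest * forest) := (forest_size z.1 + forest_size z.2)%N.
apply: (mem_wprod_additive (phi := phi)) y_ts => [u|u v|c cts u]; rewrite /phi.
- by rewrite inE => /eqP->.
- by rewrite !forest_size_cat addnACA.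
- rewrite inE => /predU1P[-> | /mapP[z z_c ->]]; first by rewrite /forest_size /= !addn0.
  by rewrite /= -(IH c cts z z_c) /forest_size /= addn0.
Qed.

Lemma cuts_tree_size_lt c x : x \in cuts c -> (tree_size x.2 < tree_size c)%N.
Proof.
rewrite mem_filter => /andP[nz_x /allcuts_size <-].
by rewrite -[X in (X < _)%N]add0n ltn_add2r forest_size_gt0 // -size_eq0.
Qed.

Lemma mem_Delta_tree c y : y \in Delta_tree c ->
  [\/ y = (1, ([::], [:: c])), y = (1, ([:: c], [::])) |
      exists2 x, x \in cuts c & y = (1, (x.1, [:: x.2]))].
Proof.
rewrite !inE => /or3P[/eqP-> | /eqP-> | /mapP[x x_c ->]]; [exact: Or31 | exact: Or32 |].
by apply: Or33; exists x.
Qed.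

Lemma mem_Delta_forest_cons c g y : y \in Delta_forest (c :: g) ->
  exists2 u, u \in Delta_tree c & exists2 v, v \in Delta_forest g & y = mulH2 u v.
Proof. by case/allpairsP => -[u v] [/= u_c v_g ->]; exists u => //; exists v. Qed.

Lemma Delta_forest_weight g y : y \in Delta_forest g -> y.1 = 1.
Proof.
elim: g y => [|c g IH] y; first by rewrite inE => /eqP->.
case/mem_Delta_forest_cons => u u_c [v /IH v1 ->]; rewrite /= v1 mulr1.
by case/mem_Delta_tree: u_c => [->|->|[x _ ->]].
Qed.

Lemma Delta_forest_size g y :
  y \in Delta_forest g -> (forest_size y.2.1 + forest_size y.2.2)%N = forest_size g.
Proof.
pose phi (z : rat * (forest * forest)) := (forest_size z.2.1 + forest_size z.2.2)%N.
rewrite Delta_forestE => /(mem_wprod_additive (phi := phi)); apply; rewrite /phi.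
- by move=> z; rewrite inE => /eqP->.
- by move=> u v; rewrite !forest_size_cat addnACA.
move=> c _ u /mem_Delta_tree[->|->|[x]]; rewrite /forest_size /= ?addn0 //.
by rewrite mem_filter => /andP[_ /allcuts_size <-] ->; rewrite /= addn0.
Qed.

Lemma Delta_forest_right_nil g y : y \in Delta_forest g -> y.2.2 = [::] -> y.2.1 = g.
Proof.
elim: g y => [|c g IH] y; first by rewrite inE => /eqP->.
case/mem_Delta_forest_cons => u u_c [v v_g ->].
by case/mem_Delta_tree: u_c => [->|->|[x _ ->]] //= /(IH v v_g)->.
Qed.

Lemma mem_Delta_forest_left g : (1, (g, [::])) \in Delta_forest g.
Proof.
elim: g => [|c g IH]; first exact: mem_head.
apply/allpairsP; exists ((1, ([:: c], [::])), (1, (g, [::]))).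
by rewrite /= mulr1 !inE eqxx orbT.
Qed.

Lemma Delta_forest_max_tree_perm g s y : all (fun c => tree_size c <= tree_size s)%N g ->
    y \in Delta_forest g -> y.2.2 = [:: s] ->
  perm_eq (map tcode (s :: y.2.1)) (map tcode g).
Proof.
elim: g y => [|c g IH] y; first by move=> _; rewrite inE => /eqP->.
case/andP=> le_c le_g /mem_Delta_forest_cons[u u_c [v v_g ->]].
case/mem_Delta_tree: u_c => [->|->|[x x_c ->]] /=.
- by case=> <- /(Delta_forest_right_nil v_g)->.
- move/(IH v le_g v_g); rewrite -(perm_cons (tcode c)) => /permPr<-.
  by rewrite -(cat1s (tcode s)) -(cat1s (tcode c)) perm_catCA.
- by case=> eq_s _; have := cuts_tree_size_lt x_c; rewrite eq_s ltnNge le_c.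
Qed.

Lemma coeff_fkey p f f' : fkey f = fkey f' -> coeff p f = coeff p f'.
Proof. by rewrite /coeff => ->. Qed.

Lemma coeff_support p g : coeff p g != 0 -> exists2 x, x \in p & fkey x.2 = fkey g.
Proof.
have [/hasP[x x_p /eqP]|no_g] := boolP (has (fun x => fkey x.2 == fkey g) p); first by exists x.
by rewrite /coeff big_hasC // eqxx.
Qed.

Lemma sum_key_class p (D : forest -> rat) g :
    (forall u v, fkey u = fkey v -> D u = D v) ->
  \sum_(x <- p | fkey x.2 == fkey g) x.1 * D x.2 = coeff p g * D g.
Proof. by move=> D_key; rewrite /coeff big_distrl; apply: eq_bigr => x /eqP/D_key->. Qed.

Lemma coeff_filter_key p f g :
  coeff [seq x <- p | fkey x.2 != fkey f] g = if fkey g == fkey f then 0 else coeff p g.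
Proof.
rewrite /coeff big_filter_cond; case: eqP => [->|ne_gf].
  by rewrite big_pred0 // => x; rewrite andbC andbN.
apply: eq_bigl => x; case: (eqVneq (fkey x.2) (fkey g)) => [->|_]; rewrite ?andbF ?andbT //.
exact/eqP.
Qed.

Lemma sum_coeff_eq0 p (D : forest -> rat) :
    (forall u v, fkey u = fkey v -> D u = D v) -> (forall g, coeff p g != 0 -> D g = 0) ->
  \sum_(x <- p) x.1 * D x.2 = 0.
Proof.
move=> D_key; have [n] := ubnP (size p); elim: n p => // n IH [|y p] lt_p D0.
  by rewrite big_nil.
rewrite (bigID (fun x => fkey x.2 == fkey y.2)) /= sum_key_class //.
have [-> | /D0->] := eqVneq (coeff (y :: p) y.2) 0; rewrite ?mulr0 ?mul0r add0r -big_filter.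
all: apply: IH => [|g].
1,3: by rewrite size_filter /= eqxx (leq_ltn_trans (count_size _ _)).
all: by rewrite coeff_filter_key; case: ifP; rewrite ?eqxx // => _ /D0.
Qed.

Lemma sum_coeff_key p (D : forest -> rat) f :
    (forall u v, fkey u = fkey v -> D u = D v) ->
    (forall g, coeff p g != 0 -> fkey g != fkey f -> D g = 0) ->
  \sum_(x <- p) x.1 * D x.2 = coeff p f * D f.
Proof.
move=> D_key D0; rewrite (bigID (fun x => fkey x.2 == fkey f)) /= sum_key_class //.
rewrite -big_filter sum_coeff_eq0 ?addr0 // => g.
by rewrite coeff_filter_key; case: ifP; rewrite ?eqxx // => /negbT/[swap]/D0; apply.
Qed.

Lemma coeff2_Delta p f g :
  coeff2 (Delta p) f g = \sum_(x <- p) x.1 * coeff2 (Delta_forest x.2) f g.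
Proof.
rewrite /Delta /coeff2 big_flatten big_map; apply: eq_bigr => x _.
by rewrite big_map mulr_sumr.
Qed.

Lemma coeff2_prim_rhs p f g : coeff2 (prim_rhs p) f g =
  (if g == [::] then coeff p f else 0) + (if f == [::] then coeff p g else 0).
Proof.
rewrite /coeff2 big_cat !big_map /= -!fkey_eq0 ![[::] == _]eq_sym.
by congr (_ + _); case: ifP => _;
  [apply: eq_bigl | apply: big_pred0 | apply: eq_bigl | apply: big_pred0] => x;
  rewrite ?andbT ?andbF.
Qed.

Lemma coeff2_Delta_forest g f f' : coeff2 (Delta_forest g) f f' =
  (count (fun y => (fkey y.2.1 == fkey f) && (fkey y.2.2 == fkey f')) (Delta_forest g))%:R.
Proof.
rewrite /coeff2 -sum1_count natr_sum big_seq_cond [RHS]big_seq_cond.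
by apply: eq_bigr => y /andP[/Delta_forest_weight-> _].
Qed.

Lemma coeff2_Delta_forest_nil g : coeff2 (Delta_forest g) [::] [::] = (g == [::])%:R.
Proof.
rewrite coeff2_Delta_forest; case: eqP => [-> // | /eqP nz_g].
rewrite (eq_in_count (a2 := pred0)) ?count_pred0 // => y /Delta_forest_size.
rewrite /= !fkey_eq0 => size_y; apply/negP => /andP[/eqP y1 /eqP y2].
by move: (forest_size_gt0 nz_g); rewrite -size_y y1 y2.
Qed.

Lemma coeff_nil_primitive p : primitive p -> coeff p [::] = 0.
Proof.
move=> prim; have := prim [::] [::]; rewrite coeff2_Delta coeff2_prim_rhs /=.
under eq_bigr => x _ do rewrite coeff2_Delta_forest_nil -fkey_eq0 mulr_natr mulrb.
by rewrite -big_mkcond -[LHS]/(coeff p [::]) -{1}[coeff p [::]]addr0 => /addrI <-.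
Qed.

Lemma coeff2_Delta_forest_cons_neq0 t A : coeff2 (Delta_forest (t :: A)) A [:: t] != 0.
Proof.
rewrite coeff2_Delta_forest pnatr_eq0 -lt0n -has_count; apply/hasP.
exists (1, (A, [:: t])); last by rewrite /= !eqxx.
apply/allpairsP; exists ((1, ([::], [:: t])), (1, (A, [::]))).
by rewrite /= mem_Delta_forest_left mem_head mulr1.
Qed.

Lemma coeff2_Delta_forest_max_tree (g A : forest) (t : tree) :
    all (fun c => tree_size c <= tree_size t)%N g -> fkey g != fkey (t :: A) ->
  coeff2 (Delta_forest g) A [:: t] = 0.
Proof.
move=> le_g ne_g; rewrite coeff2_Delta_forest (eq_in_count (a2 := pred0)) ?count_pred0 //.
move=> y y_g /=; apply/negP => /andP[/eqP y1 y2].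
have [s y2s] : exists s, y.2.2 = [:: s].
  by move/eqP/(congr1 size): y2; rewrite !size_fkey; case: y.2.2 => [|s []] //; exists s.
move: y2; rewrite y2s !fkey1 => /eqP[tcode_s].
have le_s : all (fun c => tree_size c <= tree_size s)%N g by rewrite /tree_size tcode_s.
move/fkeyP: (Delta_forest_max_tree_perm le_s y_g y2s) => key_g.
by move/eqP: ne_g; apply; rewrite -key_g -cat1s fkey_cat y1 fkey1 tcode_s -fkey1 -fkey_cat.
Qed.

Lemma exists_max_tree p f : coeff p f != 0 -> f != [::] ->
  exists g t, [/\ coeff p g != 0, t \in g &
    forall g' c, coeff p g' != 0 -> c \in g' -> (tree_size c <= tree_size t)%N].
Proof.
move=> nz_f f_nil.
pose occurs n := has (fun x => (coeff p x.2 != 0) && has (fun c => tree_size c == n) x.2) p.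
have occurs_tree g c : coeff p g != 0 -> c \in g -> occurs (tree_size c).
  move=> nz_g c_g; have [x x_p key_x] := coeff_support nz_g.
  have/fkeyP/perm_mem perm_x := key_x.
  have /mapP[c' c'_x eq_c] : tcode c \in map tcode x.2 by rewrite perm_x map_f.
  apply/hasP; exists x; rewrite // (coeff_fkey p key_x) nz_g.
  by apply/hasP; exists c'; rewrite // /tree_size eq_c.
have bound n : occurs n -> (n <= \max_(x <- p) \max_(c <- x.2) tree_size c)%N.
  case/hasP => x x_p /andP[_ /hasP[c c_x /eqP <-]].
  apply: leq_trans (leq_bigmax_seq _ c_x isT) _.
  exact: (leq_bigmax_seq (F := fun x => \max_(c <- x.2) tree_size c)).
have [c f_c] : exists c, c \in f by case: f f_nil nz_f => // c f; exists c; apply: mem_head.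
have occurs_ex : exists n, occurs n by exists (tree_size c); apply: occurs_tree f_c.
case: (ex_maxnP occurs_ex bound) => m.
case/hasP => x _ /andP[nz_x /hasP[t t_x /eqP size_t]] max_m.
exists x.2, t; split=> // g' c' nz_g' c'_g'; rewrite size_t.
exact: max_m (occurs_tree _ _ nz_g' c'_g').
Qed.

Theorem lemma9p4 (p : H) : primitive p -> pic_zero p -> H_zero p.
Proof.
move=> prim pic0 f; apply/eqP; apply: contraT => nz_f.
have f_nil : f != [::] by apply: contraNneq nz_f => ->; rewrite coeff_nil_primitive.
have [F0 [t [nz_F0 t_F0 max_t]]] := exists_max_tree nz_f f_nil.
set A := rem t F0.
have key_F0 : fkey F0 = fkey (t :: A) by apply/fkeyP; rewrite perm_map ?perm_to_rem.
have nz_tA : coeff p (t :: A) != 0 by rewrite -(coeff_fkey p key_F0).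
have A_nil : A != [::] by apply: contraNneq nz_tA => ->; rewrite pic0.
pose G g := coeff2 (Delta_forest g) A [:: t].
have G_key u v : fkey u = fkey v -> G u = G v.
  by move/Delta_forest_wequiv/coeff2_wequiv; apply.
have G_max g : coeff p g != 0 -> fkey g != fkey (t :: A) -> G g = 0.
  by move=> nz_g; apply/coeff2_Delta_forest_max_tree/allP => c /(max_t g c nz_g).
have := prim A [:: t]; rewrite coeff2_Delta coeff2_prim_rhs (sum_coeff_key G_key G_max).
rewrite (negbTE A_nil) addr0 => /eqP; rewrite mulf_eq0 (negbTE nz_tA).
by rewrite (negbTE (coeff2_Delta_forest_cons_neq0 t A)).
Qed.
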